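(* Let the setting and notation be as in the context. Suppose the $L_1$-Consistency Assumption and the Concentration Assumption hold, and that $n^{1/2}\big(r_4(n)r_3(n,\theta^* )+r_5(n)r_1(n,\theta^* )\big)=o(1)$. Then $$n^{1/2}\hat S(\hat{\boldsymbol\beta}_{\theta^*})=n^{1/2}S(\boldsymbol\beta^* )+o_p(1),$$ where $S(\boldsymbol\beta)=\mathbf v^{*T}\mathbf t(\mathbf Z,\boldsymbol\beta)$ and $\hat{\boldsymbol\beta}_{\theta^*}=(\theta^*,\hat{\boldsymbol\gamma}^T)^T$.
   Context: Data: a random matrix $\mathbf Z\in\mathbb R^{n\times q}$; $\mathbb P^*$ denotes probability under the true parameter $\boldsymbol\beta^*\in\mathbb R^d$; $o_p(1)$ is with respect to $\mathbb P^*$ as $n\to\infty$ ($d$ may depend on $n$). Let $\mathbf t(\mathbf Z,\boldsymbol\beta):\mathbb R^{n\times q}\times\mathbb R^d\to\mathbb R^d$ be twice differentiable in $\boldsymbol\beta$, $E_{\mathbf t}(\boldsymbol\beta)=\lim_n\mathbb E\,\mathbf t(\mathbf Z,\boldsymbol\beta)$, $\boldsymbol\beta^*$ the unique root of $E_{\mathbf t}$. $\mathbf T(\mathbf Z,\boldsymbol\beta)=\partial\mathbf t/\partial\boldsymbol\beta$, $E_{\mathbf T}(\boldsymbol\beta)=\lim_n\mathbb E\,\mathbf T(\mathbf Z,\boldsymbol\beta)$, invertible at $\boldsymbol\beta^*$. Write $\boldsymbol\beta=(\theta,\boldsymbol\gamma^T)^T$ ($\theta$ first coordinate), $\boldsymbol\beta^*=(\theta^*,\boldsymbol\gamma^{*T})^T$,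 $\boldsymbol\beta_{\check\theta}=(\check\theta,\boldsymbol\gamma^T)^T$. $\mathbf v^{*T}$ = first row of $[E_{\mathbf T}(\boldsymbol\beta^* )]^{-1}$. $\hat{\boldsymbol\beta}=(\hat\theta,\hat{\boldsymbol\gamma}^T)^T=\arg\min\|\boldsymbol\beta\|_1$ s.t. $\|\mathbf t(\mathbf Z,\boldsymbol\beta)\|_\infty\le\lambda$; $\hat{\mathbf v}=\arg\min\|\mathbf v\|_1$ s.t. $\|\mathbf v^T\mathbf T(\mathbf Z,\hat{\boldsymbol\beta})-\mathbf e_1\|_\infty\le\lambda'$, $\mathbf e_1=(1,0,\dots,0)$; $\hat S(\boldsymbol\beta)=\hat{\mathbf v}^T\mathbf t(\mathbf Z,\boldsymbol\beta)$. $[\mathbf A]_{-1}$ is $\mathbf A$ without its first column. Concentration Assumption: there is a neighborhood $\mathcal N_{\theta^*}$ of $\theta^*$ and functions $r_1,r_2,r_3$ with $\sup_{\theta\in\mathcal N_{\theta^*}}\max_i r_i(n,\theta)=o(1)$ such that for all $\theta\in\mathcal N_{\theta^*}$: $\lim_n\mathbb P^*(\|\mathbf t(\mathbf Z,\boldsymbol\beta^*_\theta)-E_{\mathbf t}(\boldsymbol\beta^*_\theta)\|_\infty\le r_1(n,\theta))=1$; $\lim_n\mathbb P^*(|\mathbf v^{*T}\mathbf t(\mathbf Z,\boldsymbol\beta^*_\theta)-\mathbf v^{*T}E_{\mathbf t}(\boldsymbol\beta^*_\theta)|\le r_2(n,\theta))=1$; $\lim_n\mathbb P^*(\sup_{\nu\in[0,1]}\|\hat{\mathbf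 v}^T\mathbf T(\mathbf Z,\tilde{\boldsymbol\beta}_\nu)-\mathbf v^{*T}E_{\mathbf T}(\boldsymbol\beta^*_\theta)\|_\infty\le r_3(n,\theta))=1$ with $\tilde{\boldsymbol\beta}_\nu=\nu\hat{\boldsymbol\beta}_\theta+(1-\nu)\boldsymbol\beta^*_\theta$; and $\sup_{\theta\in\mathcal N_{\theta^*}}\|E_{\mathbf t}(\boldsymbol\beta^*_\theta)\|_\infty<\infty$, $\sup_{\theta\in\mathcal N_{\theta^*}}\|\mathbf v^{*T}[E_{\mathbf T}(\boldsymbol\beta^*_\theta)]_{-1}\|_\infty<\infty$. $L_1$-Consistency Assumption: $\lim_n\mathbb P^*(\|\hat{\boldsymbol\beta}-\boldsymbol\beta^*\|_1\le r_4(n))=1$, $\lim_n\mathbb P^*(\|\hat{\mathbf v}-\mathbf v^*\|_1\le r_5(n))=1$, $\max(r_4(n),r_5(n))=o(1)$. *)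

From HB Require Import structures.
From mathcomp Require Import all_boot all_order all_algebra.
From mathcomp Require Import all_classical all_reals all_analysis.
Set Implicit Arguments. Unset Strict Implicit. Unset Printing Implicit Defensive.
Import Order.TTheory GRing.Theory Num.Theory.
Import numFieldNormedType.Exports.
Local Open Scope classical_set_scope.
Local Open Scope ring_scope.

Definition mxinf (R : realType) m n (A : 'M[R]_(m, n)) : R :=
  \big[Num.max/0]_(ij : 'I_m * 'I_n) `|A ij.1 ij.2|.

Definition vnorm1 (R : realType) n (x : 'cV[R]_n) : R := \sum_i `|x i 0|.

Definition dotv (R : realType) n (v x : 'cV[R]_n) : R := (v^T *m x) 0 0.

(* replace the first coordinate theta of beta = (theta, gamma^T)^T *)
Definition setfirst (R : realType) d (th : R) (b : 'cV[R]_d.+1) : 'cV[R]_d.+1 :=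
  \col_i (if i == ord0 then th else b i 0).

Definition dropfirst (R : realType) m d (A : 'M[R]_(m, d.+1)) : 'M[R]_(m, d) :=
  \matrix_(i, j) A i (lift ord0 j).

Definition jacT (R : realType) D (f : 'cV[R]_D -> 'cV[R]_D) (b : 'cV[R]_D)
  : 'M[R]_D :=
  \matrix_(i, j) ('D_(delta_mx j 0) (fun x => f x i 0) b).

Definition e1 (R : realType) d : 'rV[R]_d.+1 := delta_mx 0 ord0.

(* lim_n P(A_n) = 1, stated with inner probability (measurable subsets) so
   that it is meaningful without measurability assumptions; for measurable
   A_n it is exactly lim_n P(A_n) = 1. *)
Definition wp1 (dd : measure_display) (Om : measurableType dd) (R : realType)
  (P : probability Om R) (A : nat -> set Om) : Prop :=
  exists B : nat -> set Om, (forall n, measurable (B n)) /\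
    (forall n, B n `<=` A n) /\ (P (B n) @[n --> \oo] --> 1%E).

(* X_n = o_p(1): for every eps > 0, P(|X_n| > eps) -> 0, stated with outer
   probability (measurable supersets). *)
Definition op1 (dd : measure_display) (Om : measurableType dd) (R : realType)
  (P : probability Om R) (X : nat -> Om -> R) : Prop :=
  forall eps : R, 0 < eps ->
  exists B : nat -> set Om, (forall n, measurable (B n)) /\
    (forall n, [set w | eps < `|X n w|] `<=` B n) /\ (P (B n) @[n --> \oo] --> 0%E).

(* Everything happens on four events whose probabilities tend to one.  There,
   since b^ := beta^_{theta*} and beta* share their first coordinate, the mean
   value theorem along the segment between them writes
   v^T t(b^) - v^T t(beta* ) as v^T T(b~) (b^ - beta* ); the row v^T T(b~) is
   within r3 of v*^T E_T(beta* ) = e_1 in sup-norm, and e_1 annihilates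
   b^ - beta*, so Hoelder bounds this term by r4 r3.  Replacing v^ by v* costs
   |(v^ - v* )^T t(beta* )| <= r5 r1 because E_t(beta* ) = 0.  The rate condition
   makes n^{1/2} (r4 r3 + r5 r1) vanish. *)
From HB Require Import structures.
From mathcomp Require Import all_boot all_order all_algebra.
From mathcomp Require Import all_classical all_reals all_analysis.
From mathcomp Require Import ring lra.
Set Implicit Arguments. Unset Strict Implicit. Unset Printing Implicit Defensive.
Import Order.TTheory GRing.Theory Num.Theory.
Import numFieldNormedType.Exports.
Local Open Scope classical_set_scope.
Local Open Scope ring_scope.

Lemma normr_le_mxinf (R : realType) m n (A : 'M[R]_(m, n)) i j :
  `|A i j| <= mxinf A.
Proof. exact: (le_bigmax 0 (fun ij : 'I_m * 'I_n => `|A ij.1 ij.2|) (i, j)). Qed.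

Lemma mxinf_ge0 (R : realType) m n (A : 'M[R]_(m, n)) : 0 <= mxinf A.
Proof. by rewrite /mxinf; elim/big_ind: _ => //= x y x0 y0; rewrite le_max x0. Qed.

Lemma vnorm1_ge0 (R : realType) n (x : 'cV[R]_n) : 0 <= vnorm1 x.
Proof. exact: sumr_ge0. Qed.

Lemma norm_mulmx_le (R : realType) n (u : 'rV[R]_n) (h : 'cV[R]_n) :
  `|(u *m h) 0 0| <= mxinf u * vnorm1 h.
Proof.
rewrite mxE /vnorm1 mulr_sumr; apply: le_trans (ler_norm_sum _ _ _) _.
by apply: ler_sum => j _; rewrite normrM ler_wpM2r // normr_le_mxinf.
Qed.

Lemma norm_dotv_le (R : realType) n (u y : 'cV[R]_n) :
  `|dotv u y| <= vnorm1 u * mxinf y.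
Proof.
rewrite /dotv mxE /vnorm1 mulr_suml; apply: le_trans (ler_norm_sum _ _ _) _.
by apply: ler_sum => j _; rewrite mxE normrM ler_wpM2l // normr_le_mxinf.
Qed.

Lemma dotvBl (R : realType) n (u v y : 'cV[R]_n) :
  dotv (u - v) y = dotv u y - dotv v y.
Proof. by rewrite /dotv linearB mulmxBl !mxE. Qed.

Lemma e1_mulmx_first0 (R : realType) n (y : 'cV[R]_n.+1) :
  y 0 0 = 0 -> (@e1 R n *m y) 0 0 = 0.
Proof.
move=> y0; rewrite mxE big1 // => j _; rewrite /e1 mxE eqxx /=.
by case: eqP => [->|_]; rewrite ?y0 ?mulr0 ?mul0r.
Qed.

Lemma setfirst_id (R : realType) n (b : 'cV[R]_n.+1) : setfirst (b 0 0) b = b.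
Proof. by apply/matrixP => i j; rewrite mxE ord1; case: eqVneq => [->|]. Qed.

Lemma setfirst_first (R : realType) n th (b : 'cV[R]_n.+1) :
  setfirst th b 0 0 = th.
Proof. by rewrite mxE eqxx. Qed.

Lemma vnorm1_setfirstB_le (R : realType) n (b a : 'cV[R]_n.+1) :
  vnorm1 (setfirst (a 0 0) b - a) <= vnorm1 (b - a).
Proof.
apply: ler_sum => i _; rewrite !mxE.
by case: eqVneq => [->|_]; rewrite ?subrr ?normr0 ?normr_ge0.
Qed.

Lemma derive_coord_jacT (R : realType) n (f : 'cV[R]_n -> 'cV[R]_n)
    (b h : 'cV[R]_n) i :
  differentiable f b ->
  'D_h (fun y => f y i 0) b = \sum_j h j 0 * jacT f b i j.
Proof.
move=> df.
have Dcoord u : 'D_u (fun y => f y i 0) b = ('d f b u) i 0.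
  by rewrite -deriveE ?derive_mx ?mxE //; exact: diff_derivable.
rewrite Dcoord; under eq_bigr => j _ do rewrite mxE Dcoord.
rewrite {1}(matrix_sum_delta h) linear_sum /= summxE.
by apply: eq_bigr => j _; rewrite big_ord1 linearZ /= mxE.
Qed.

Lemma derive_dotv (R : realType) n (f : 'cV[R]_n -> 'cV[R]_n) (v b h : 'cV[R]_n) :
  differentiable f b ->
  derivable (fun y => dotv v (f y)) b h /\
  'D_h (fun y => dotv v (f y)) b = (v^T *m jacT f b *m h) 0 0.
Proof.
move=> df.
have -> : (fun y => dotv v (f y)) = \sum_i (v i 0 \*: (fun y => f y i 0)).
  by apply/funext => y; rewrite fct_sumE /dotv mxE; apply: eq_bigr => i _; rewrite mxE.
have Dcoord i : derivable (fun y => f y i 0) b h.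
  exact/diff_derivable/(differentiable_comp df (differentiable_coord _ i 0)).
split; first by apply: derivable_sum => i; exact: derivableZ.
rewrite derive_sum; last by move=> i; exact: derivableZ.
under eq_bigr => i _ do rewrite deriveZ // derive_coord_jacT //.
rewrite mxE; under [RHS]eq_bigr => j _ do rewrite mxE mulr_suml.
rewrite exchange_big /=; apply: eq_bigr => i _.
by rewrite /GRing.scale /= mulr_sumr; apply: eq_bigr => j _; rewrite !mxE; ring.
Qed.

Lemma dotv_mvt (R : realType) n (f : 'cV[R]_n -> 'cV[R]_n) (v x a : 'cV[R]_n) :
  (forall b, differentiable f b) ->
  exists2 c : R, 0 <= c <= 1 &
    dotv v (f x) - dotv v (f a) =
    (v^T *m jacT f (c *: x + (1 - c) *: a) *m (x - a)) 0 0.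
Proof.
move=> df; set h := x - a.
pose F y := dotv v (f y); pose g s := F (s *: h + a).
pose dg s := (v^T *m jacT f (s *: h + a) *m h) 0 0.
have gq s : (fun k : R => k^-1 *: ((g \o shift s) (k *: 1) - g s)) =
    (fun k : R => k^-1 *: ((F \o shift (s *: h + a)) (k *: h) - F (s *: h + a))).
  apply/funext => k; rewrite /g /shift /=.
  by rewrite [k *: 1]mulr1 scalerDl addrA.
have gd s : is_derive s (1 : R) g (dg s).
  have [Fd DF] := derive_dotv v h (df (s *: h + a)).
  have dgs : derivable g s 1 by rewrite /derivable gq.
  by rewrite /dg -DF /derive -gq; exact: derivableP.
have gc : {within `[0, 1], continuous g}.
  apply: continuous_subspaceT => s.
  by have [/derivable1_diffP/differentiable_continuous] := gd s.
have [c c01 gc01] := MVT_segment ler01 (fun s _ => gd s) gc.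
exists c; first by move: c01; rewrite in_itv.
move: gc01; rewrite /g /dg subr0 mulr1 scale1r scale0r add0r /h subrK => ->.
by rewrite scalerBr scalerBl scale1r addrAC addrA.
Qed.

Lemma dotv_increment_le (R : realType) n (f : 'cV[R]_n.+1 -> 'cV[R]_n.+1)
    (v x a : 'cV[R]_n.+1) (r3 r4 : R) :
  (forall b, differentiable f b) -> x 0 0 = a 0 0 ->
  (forall nu : R, 0 <= nu <= 1 ->
     mxinf (v^T *m jacT f (nu *: x + (1 - nu) *: a) - @e1 R n) <= r3) ->
  vnorm1 (x - a) <= r4 ->
  `|dotv v (f x) - dotv v (f a)| <= r4 * r3.
Proof.
move=> df xa0 near_e1 xa_r4; have [c c01 ->] := dotv_mvt v x a df.
have W_r3 := near_e1 c c01; set W := v^T *m _ - _ in W_r3.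
rewrite -[v^T *m _](subrK (@e1 R n)) -/W mulmxDl mxE e1_mulmx_first0; last first.
  by rewrite !mxE xa0 subrr.
rewrite addr0; apply: le_trans (norm_mulmx_le _ _) _.
have := mxinf_ge0 W; have := vnorm1_ge0 (x - a); nra.
Qed.

Lemma score_expansion_le (R : realType) n (f : 'cV[R]_n.+1 -> 'cV[R]_n.+1)
    (vh vs x a : 'cV[R]_n.+1) (r1 r3 r4 r5 : R) :
  (forall b, differentiable f b) -> x 0 0 = a 0 0 ->
  (forall nu : R, 0 <= nu <= 1 ->
     mxinf (vh^T *m jacT f (nu *: x + (1 - nu) *: a) - @e1 R n) <= r3) ->
  vnorm1 (x - a) <= r4 -> mxinf (f a) <= r1 -> vnorm1 (vh - vs) <= r5 ->
  `|dotv vh (f x) - dotv vs (f a)| <= r4 * r3 + r5 * r1.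
Proof.
move=> df xa0 near_e1 xa_r4 fa_r1 v_r5.
rewrite -(subrKA (dotv vh (f a))); apply: le_trans (ler_normD _ _) _.
apply: lerD; first exact: dotv_increment_le near_e1 xa_r4.
rewrite -dotvBl; apply: le_trans (norm_dotv_le _ _) _.
have := mxinf_ge0 (f a); have := vnorm1_ge0 (vh - vs); nra.
Qed.

Section HighProbability.
Variables (dd : measure_display) (Om : measurableType dd) (R : realType).
Variable P : probability Om R.

Lemma cvg_probability_setC (B : nat -> set Om) :
  (forall n, measurable (B n)) ->
  P (B n) @[n --> \oo] --> 1%E -> P (~` B n) @[n --> \oo] --> 0%E.
Proof.
move=> mB PB1; under eq_fun => n do rewrite probability_setC //.
by rewrite -(subee (x := 1%E)) //; apply: cvgeB => //; exact: cvg_cst.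
Qed.

Lemma cvg_probability_setCV (B : nat -> set Om) :
  (forall n, measurable (B n)) ->
  P (~` B n) @[n --> \oo] --> 0%E -> P (B n) @[n --> \oo] --> 1%E.
Proof.
move=> mB PBC0.
have -> : (fun n => P (B n)) = (fun n => 1 - P (~` B n))%E.
  apply/funext => n; rewrite -{1}[B n]setCK probability_setC //.
  exact: measurableC.
by rewrite -[X in _ --> X](sube0 1%E); apply: cvgeB => //; exact: cvg_cst.
Qed.

Lemma wp1I (A B : nat -> set Om) :
  wp1 P A -> wp1 P B -> wp1 P (fun n => A n `&` B n).
Proof.
move=> [A' [mA' [sA' PA']]] [B' [mB' [sB' PB']]].
have mAB n : measurable (A' n `&` B' n) by exact: measurableI.
exists (fun n => A' n `&` B' n); split=> //; split.
  by move=> n w [/sA' ? /sB' ?].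
apply: cvg_probability_setCV => //.
have := cvgeD _ (cvg_probability_setC mA' PA') (cvg_probability_setC mB' PB').
rewrite adde0 => /(_ _ isT) PABC.
apply: (squeeze_cvge _ (cvg_cst 0%E) PABC); near=> n; rewrite measure_ge0 /= setCI.
exact: measureU2 (measurableC _) (measurableC _).
Unshelve. all: end_near.
Qed.

Lemma op1_of_wp1_le (A : nat -> set Om) (X : nat -> Om -> R) (c : nat -> R) :
  wp1 P A -> c @ \oo --> 0 -> (forall n w, A n w -> `|X n w| <= c n) ->
  op1 P X.
Proof.
move=> [B [mB [sB PB1]]] c0 X_c eps eps0.
exists (fun n => ~` B n `|` (if c n < eps then set0 else setT)); split.
  by move=> n; apply: measurableU; [exact: measurableC | case: ifP].
split.
  move=> n w Xeps /=; case: ifPn => [c_eps|_]; last by right.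
  by left => /sB /X_c; apply/negP; rewrite -ltNge; apply: lt_trans Xeps.
apply: (squeeze_cvge _ (cvg_cst 0%E) (cvg_probability_setC mB PB1)); near=> n; rewrite measure_ge0 /=.
have -> : c n < eps by near: n; exact: (cvgr_lt 0).
by rewrite setU0.
Unshelve. all: end_near.
Qed.

End HighProbability.

Theorem lemma1
  (R : realType) (dd : measure_display) (Om : measurableType dd)
  (P : probability Om R)
  (q : nat) (d : nat -> nat)                       (* beta in R^{(d n).+1} *)
  (Z : forall n : nat, Om -> 'M[R]_(n, q))          (* data *)
  (t : forall n : nat, 'M[R]_(n, q) -> 'cV[R]_(d n).+1 -> 'cV[R]_(d n).+1)
  (Et : forall n : nat, 'cV[R]_(d n).+1 -> 'cV[R]_(d n).+1)
  (ET : forall n : nat, 'cV[R]_(d n).+1 -> 'M[R]_((d n).+1))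
  (bstar : forall n : nat, 'cV[R]_(d n).+1) (thstar : R)
  (vstar : forall n : nat, 'cV[R]_(d n).+1)
  (lam lam' : nat -> R)
  (bhat vhat : forall n : nat, Om -> 'cV[R]_(d n).+1)
  (N : set R) (r1 r2 r3 : nat -> R -> R) (r4 r5 : nat -> R) :
  (* t is twice differentiable in beta *)
  (forall n Zn b, differentiable (t n Zn) b) ->
  (forall n Zn (i j : 'I_(d n).+1) b,
     differentiable (fun x => jacT (t n Zn) x i j) b) ->
  (* beta* is the unique root of E_t, theta* its first coordinate *)
  (forall n, Et n (bstar n) = 0) ->
  (forall n b, Et n b = 0 -> b = bstar n) ->
  (forall n, bstar n ord0 0 = thstar) ->
  (* E_T(beta* ) invertible, v*^T = first row of its inverse *)
  (forall n, ET n (bstar n) \in unitmx) ->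
  (forall n, vstar n = (row ord0 (invmx (ET n (bstar n))))^T) ->
  (* the Dantzig-type estimators *)
  (forall n w, mxinf (t n (Z n w) (bhat n w)) <= lam n /\
     forall b, mxinf (t n (Z n w) b) <= lam n -> vnorm1 (bhat n w) <= vnorm1 b) ->
  (forall n w,
     mxinf ((vhat n w)^T *m jacT (t n (Z n w)) (bhat n w) - @e1 R (d n)) <= lam' n /\
     forall v, mxinf (v^T *m jacT (t n (Z n w)) (bhat n w) - @e1 R (d n)) <= lam' n ->
       vnorm1 (vhat n w) <= vnorm1 v) ->
  (* Concentration Assumption *)
  N \in nbhs thstar ->
  ((fun n => ereal_sup
      [set (Num.max (r1 n th) (Num.max (r2 n th) (r3 n th)))%:E | th in N])
     @ \oo --> 0%E) ->
  (forall th, N th ->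
     wp1 P (fun n => [set w | mxinf (t n (Z n w) (setfirst th (bstar n))
                                     - Et n (setfirst th (bstar n))) <= r1 n th])) ->
  (forall th, N th ->
     wp1 P (fun n => [set w | `|dotv (vstar n) (t n (Z n w) (setfirst th (bstar n)))
                             - dotv (vstar n) (Et n (setfirst th (bstar n)))|
                             <= r2 n th])) ->
  (forall th, N th ->
     wp1 P (fun n => [set w | forall nu : R, 0 <= nu <= 1 ->
        mxinf ((vhat n w)^T *m jacT (t n (Z n w))
                 (nu *: setfirst th (bhat n w) + (1 - nu) *: setfirst th (bstar n))
               - (vstar n)^T *m ET n (setfirst th (bstar n))) <= r3 n th])) ->
  (exists M : R, forall n th, N th ->
     mxinf (Et n (setfirst th (bstar n))) <= M) ->
  (exists M : R, forall n th, N th ->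
     mxinf (dropfirst ((vstar n)^T *m ET n (setfirst th (bstar n)))) <= M) ->
  (* L1-Consistency Assumption *)
  wp1 P (fun n => [set w | vnorm1 (bhat n w - bstar n) <= r4 n]) ->
  wp1 P (fun n => [set w | vnorm1 (vhat n w - vstar n) <= r5 n]) ->
  ((fun n => Num.max (r4 n) (r5 n)) @ \oo --> 0) ->
  (* rate condition *)
  ((fun n => Num.sqrt n%:R * (r4 n * r3 n thstar + r5 n * r1 n thstar)) @ \oo --> 0) ->
  (* conclusion: n^{1/2} S^(beta^_{theta*}) = n^{1/2} S(beta* ) + o_p(1) *)
  op1 P (fun n w =>
     Num.sqrt n%:R * dotv (vhat n w) (t n (Z n w) (setfirst thstar (bhat n w)))
     - Num.sqrt n%:R * dotv (vstar n) (t n (Z n w) (bstar n))).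
Proof.
(* Only the assumptions at theta = theta* enter. *)
move=> t_diff _ Et0 _ bstar1 ET_unit vstarE _ _ N_thstar _ r1_conc _ r3_conc _ _
  b_cons v_cons _ rate.
have Nth : N thstar by move: N_thstar; rewrite inE => /nbhs_singleton.
have vstar_e1 n : (vstar n)^T *m ET n (bstar n) = @e1 R (d n).
  by rewrite vstarE trmxK -row_mul mulVmx // row1.
have setfirst_bstar n : setfirst thstar (bstar n) = bstar n.
  by rewrite -(bstar1 n) setfirst_id.
have events := wp1I (wp1I (r1_conc _ Nth) (r3_conc _ Nth)) (wp1I b_cons v_cons).
apply: op1_of_wp1_le events rate _ => n w [[r1_w r3_w] [b_w v_w]].
rewrite -mulrBr normrM ger0_norm ?sqrtr_ge0 // ler_wpM2l ?sqrtr_ge0 //.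
apply: score_expansion_le v_w => //.
- by rewrite setfirst_first bstar1.
- by move: r3_w; rewrite /= setfirst_bstar vstar_e1.
- by rewrite -(bstar1 n); exact: le_trans (vnorm1_setfirstB_le _ _) b_w.
- by move: r1_w; rewrite /= setfirst_bstar Et0 subr0.
Qed.
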